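(* Let $m\ge 1$ be an integer, $\Gamma_1,\Gamma_2$ co-prime integers with $1<\Gamma_1<\Gamma_2$, $m_1=m\Gamma_1$, $m_2=m\Gamma_2$, and $\sigma_1=|\Gamma_2|_{\Gamma_1}\ge 2$. Let $N$ be an integer with $0\le N< m_1\left(1+\lfloor m_2/m_1\rfloor\lfloor m_1/|m_2|_{m_1}\rfloor\right)$, write $N=n_im_i+r_i$ with $0\le r_i<m_i$ ($i=1,2$), and let $\tilde r_1,\tilde r_2$ be erroneous remainders with errors $\Delta r_i=\tilde r_i-r_i$ satisfying $-\sigma_1/2\le (\Delta r_1-\Delta r_2)/m<\sigma_1/2$. Let $\mathbf q_{21}=(\tilde r_1-\tilde r_2)/m$ and suppose $\mathbf q_{21}<-\sigma_1/2$. If $$\frac{\sigma_1}{2}\le \mathbf q_{21}-\left\lfloor\frac{\mathbf q_{21}}{\Gamma_1}\right\rfloor\Gamma_1<\left\lfloor\frac{\Gamma_1}{\sigma_1}\right\rfloor\sigma_1-\frac{\sigma_1}{2},$$ then $1\le n_2\le \lfloor\Gamma_1/\sigma_1\rfloor-1$; otherwise $n_2=0$.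
   Context: $|a|_b$ denotes the remainder of the integer $a$ modulo the positive integer $b$ (in $[0,b)$). Erroneous remainders are integers $\tilde r_i$ with $0\le \tilde r_i<m_i$. *)

From HB Require Import structures.
From mathcomp Require Import all_boot all_order all_algebra.
Set Implicit Arguments. Unset Strict Implicit. Unset Printing Implicit Defensive.

(* The residues satisfy r1 - r2 = m (n2 G2 - n1 G1), so writing G2 = k G1 + sigma1 the observed
   quantity q21 equals n2 sigma1 + e modulo G1, where e is the normalized residue error,
   |e| <= sigma1/2.  The hypothesis q21 < -sigma1/2 forces n2 G2 < n1 G1, and together with the
   bound on N this gives n2 < L := floor (G1 / sigma1).  Hence n2 sigma1 + e lies in
   [-sigma1/2, G1 - sigma1/2): its remainder modulo G1 is n2 sigma1 + e itself, except when
   n2 = 0 and e < 0, where it is G1 + e >= L sigma1 - sigma1/2.  The window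
   [sigma1/2, L sigma1 - sigma1/2) therefore contains the remainder exactly when n2 >= 1. *)

From HB Require Import structures.
From mathcomp Require Import all_boot all_order all_algebra.
From mathcomp Require Import ring lra zify.
Set Implicit Arguments. Unset Strict Implicit. Unset Printing Implicit Defensive.
Import Order.TTheory GRing.Theory Num.Theory.
Local Open Scope ring_scope.

Section FlooredModulo.

Variable R : archiRealFieldType.

Definition fmod (q G : R) : R := q - (Num.floor (q / G))%:~R * G.

Lemma fmod_small (q G : R) : 0 <= q < G -> fmod q G = q.
Proof.
case/andP=> q_ge0 q_ltG; have G_gt0 : 0 < G by apply: le_lt_trans q_ltG.
rewrite /fmod; have -> : Num.floor (q / G) = 0.
  by apply: floor_def; rewrite add0r mulr0z ler_pdivlMr // ltr_pdivrMr // mul0r mul1r q_ge0.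
by rewrite mul0r subr0.
Qed.

Lemma fmodDMz (q G : R) (c : int) : G != 0 -> fmod (q + c%:~R * G) G = fmod q G.
Proof.
move=> G_neq0; rewrite /fmod mulrDl mulfK // floorDrz ?intr_int // intrKfloor.
by rewrite intrD mulrDl opprD addrACA subrr addr0.
Qed.

(* For [n = 0] the residue is either [e < s/2] or [G + e >= L s - s/2]. *)
Lemma fmod_window_gt0 (s G e : R) (n L : nat) (c : int) :
  0 < s -> L%:R * s <= G -> (n < L)%N -> - (s / 2) <= e < s / 2 ->
  let x := fmod (n%:R * s + e + c%:~R * G) G in
  (s / 2 <= x < L%:R * s - s / 2) = (0 < n)%N.
Proof.
move=> s_gt0 LsG n_ltL /andP[e_ge e_lt] x.
have nsL : n%:R * s + s <= L%:R * s.
  by rewrite -[X in _ + X]mul1r -mulrDl ler_pM2r // natr1 ler_nat.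
have nsG : n%:R * s + s <= G by apply: le_trans LsG.
have ns_ge0 : 0 <= n%:R * s by rewrite mulr_ge0 // ltW.
have G_neq0 : G != 0 by apply/lt0r_neq0; lra.
rewrite /x fmodDMz //.
have [->|n_gt0] := posnP n.
  rewrite mul0r add0r /=; have [e_ge0|e_lt0] := lerP 0 e.
    by rewrite fmod_small; [lra | apply/andP; lra].
  rewrite -[e](addrK G) -[- G]mulN1r -[-1]/((-1)%:~R) fmodDMz // fmod_small; last first.
    by apply/andP; lra.
  by apply/negbTE; apply/negP => /andP[_]; lra.
have n_ge1 : 1 <= n%:R :> R by rewrite ler1n.
have s_le_ns : s <= n%:R * s by rewrite ler_peMl // ltW.
by rewrite fmod_small; apply/andP; lra.
Qed.

End FlooredModulo.

Lemma residue_diff_div (R : numFieldType) (m a b N : nat) : (0 < m)%N ->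
  ((N %% (m * a))%:R - (N %% (m * b))%:R) / m%:R
    = (N %/ (m * b))%:R * b%:R - (N %/ (m * a))%:R * a%:R :> R.
Proof.
move=> m_gt0; have m_neq0 : m%:R != 0 :> R by rewrite pnatr_eq0 -lt0n.
have modE d : (N %% (m * d))%:R = N%:R - (N %/ (m * d))%:R * (m%:R * d%:R) :> R.
  by rewrite {2}(divn_eq N (m * d)) natrD !natrM addrC addKr.
by rewrite !modE; field.
Qed.

Lemma quotient_lt_of_mul_lt (a b k L n1 n2 : nat) :
  (0 < a)%N -> (k * a <= b)%N -> (n1 <= k * L)%N -> (n2 * b < n1 * a)%N -> (n2 < L)%N.
Proof.
move=> a_gt0 kab n1kL n2n1; rewrite ltnNge; apply/negP => L_le_n2.
have : (L * k * a <= n2 * b)%N by rewrite -mulnA leq_mul.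
have : (n1 * a <= k * L * a)%N by rewrite leq_mul2r n1kL orbT.
lia.
Qed.

Theorem lemma3 (m G1 G2 N rt1 rt2 : nat) :
  (1 <= m)%N -> (1 < G1)%N -> (G1 < G2)%N -> coprime G1 G2 ->
  (2 <= G2 %% G1)%N ->
  (N < (m * G1) * (1 + ((m * G2) %/ (m * G1)) * ((m * G1) %/ ((m * G2) %% (m * G1)))))%N ->
  (rt1 < m * G1)%N -> (rt2 < m * G2)%N ->
  let m1 := (m * G1)%N in
  let m2 := (m * G2)%N in
  let sigma1 := (G2 %% G1)%N in
  let r1 := (N %% m1)%N in
  let r2 := (N %% m2)%N in
  let n2 := (N %/ m2)%N in
  let dr1 : rat := rt1%:R - r1%:R in
  let dr2 : rat := rt2%:R - r2%:R in
  let q21 : rat := (rt1%:R - rt2%:R) / m%:R in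
  - (sigma1%:R / 2) <= (dr1 - dr2) / m%:R < sigma1%:R / 2 ->
  q21 < - (sigma1%:R / 2) ->
  let x : rat := q21 - (Num.floor (q21 / G1%:R))%:~R * G1%:R in
  ((sigma1%:R / 2 <= x < ((G1 %/ sigma1)%N)%:R * sigma1%:R - sigma1%:R / 2) ->
     (1 <= n2 <= (G1 %/ sigma1) - 1)%N) /\
  (~ (sigma1%:R / 2 <= x < ((G1 %/ sigma1)%N)%:R * sigma1%:R - sigma1%:R / 2) ->
     n2 = 0%N).
Proof.
move=> m_gt0 G1_gt1 _ _ s_ge2 N_lt _ _ m1 m2 s r1 r2 n2 dr1 dr2 q21 e_bnd q21_lt x.
set n1 := (N %/ m1)%N; set k := (G2 %/ G1)%N; set L := (G1 %/ s)%N.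
set e := (dr1 - dr2) / m%:R in e_bnd.
have q21E : q21 = (n2 * G2)%:R - (n1 * G1)%:R + e.
  by rewrite /q21 /e /dr1 /dr2 !natrM -residue_diff_div //; field; rewrite pnatr_eq0 -lt0n.
have n1_le : (n1 <= k * L)%N.
  have m1_gt0 : (0 < m1)%N by rewrite muln_gt0 m_gt0 ltnW.
  by move: N_lt; rewrite divnMl // -muln_modr divnMl // mulnC -ltn_divLR.
have n2_ltL : (n2 < L)%N.
  apply: (@quotient_lt_of_mul_lt G1 G2 k L n1 n2 _ _ n1_le); first exact: ltnW.
    by rewrite leq_divM.
  by rewrite -(ltr_nat rat) -subr_lt0; move: e_bnd; lra.
have q21_split : q21 = n2%:R * s%:R + e + ((n2 * k)%:Z - n1%:Z)%:~R * G1%:R.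
  by rewrite q21E (divn_eq G2 G1) !natrM natrD natrM intrB; ring.
have Ls_le : L%:R * s%:R <= G1%:R :> rat by rewrite -natrM ler_nat leq_divM.
have s_gt0 : 0 < s%:R :> rat by rewrite ltr0n ltnW.
have window := fmod_window_gt0 ((n2 * k)%:Z - n1%:Z) s_gt0 Ls_le n2_ltL e_bnd.
rewrite -q21_split /= in window; have -> : x = fmod q21 G1%:R by [].
split => [|/negP]; rewrite window; last by rewrite -eqn0Ngt => /eqP.
by move=> n2_gt0; rewrite n2_gt0 subn1 -ltnS prednK // (leq_ltn_trans _ n2_ltL).
Qed.
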